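(* For every positive integer $m$ and every orthogonality graph $G$ in $\mathbb{S}^{d-1}$, the blow-up graph $G^{m}$ is an orthogonality graph in $\mathbb{S}^{2d-1}$.
   Context: $\mathbb{S}^{d-1}\subseteq\mathbb{R}^d$ is the set of unit vectors. A graph $G$ is an orthogonality graph in $S\subseteq\mathbb{R}^d$ if there is an injective map from $V(G)$ to $S$ such that adjacent vertices are mapped to orthogonal vectors (the representation need not be faithful). For a graph $G$ and positive integer $m$, the blow-up $G^m$ is obtained from $G$ by replacing each vertex by an independent set of size $m$ and each edge by a complete bipartite graph $K_{m,m}$ between the two corresponding independent sets. *)

From HB Require Import structures.
From mathcomp Require Import all_boot all_order all_algebra.
From mathcomp Require Import reals.
Set Implicit Arguments. Unset Strict Implicit. Unset Printing Implicit Defensive.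
Import Order.TTheory GRing.Theory Num.Theory.
Local Open Scope ring_scope.

Definition dotv (R : realType) (n : nat) (u v : 'rV[R]_n) : R :=
  \sum_(i < n) u 0 i * v 0 i.

Definition on_sphere (R : realType) (n : nat) (u : 'rV[R]_n) : Prop :=
  dotv u u = 1.

(* A (simple) graph on vertex set V, given by its adjacency relation adj,
   is an orthogonality graph in S^{n-1}: there is an injective map into the
   unit sphere sending adjacent vertices to orthogonal vectors
   (the representation need not be faithful). *)
Definition orth_graph_in_sphere (R : realType) (n : nat) (V : finType)
    (adj : rel V) : Prop :=
  exists f : V -> 'rV[R]_n,
    [/\ injective f,
        forall x, on_sphere (f x)
      & forall x y, adj x y -> dotv (f x) (f y) = 0].

Definition blowup (V : finType) (m : nat) (adj : rel V) : rel (V * 'I_m) :=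
  fun x y => adj x.1 y.1.

From HB Require Import structures.
From mathcomp Require Import all_boot all_order all_algebra.
From mathcomp Require Import reals.
From mathcomp Require Import ring lra.
Set Implicit Arguments. Unset Strict Implicit. Unset Printing Implicit Defensive.
Import Order.TTheory GRing.Theory Num.Theory.
Local Open Scope ring_scope.

(* Send the copy (v, i) of a vertex v to (a_i f(v), t_i f(v)) in R^d x R^d,
   where the (a_i, t_i) are distinct points of the unit circle with a_i > 0.
   Inner products get multiplied by a_i a_j + t_i t_j, so orthogonality and
   unit length are preserved; and equal images force <f(v), f(w)> = 1 with
   t_i = t_j, hence v = w and i = j. *)

Section InnerProduct.
Variables (R : realType) (n : nat).
Implicit Types u v w : 'rV[R]_n.

Lemma dotvZl (a : R) u v : dotv (a *: u) v = a * dotv u v.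
Proof. by rewrite /dotv mulr_sumr; apply: eq_bigr => i _; rewrite !mxE mulrA. Qed.

Lemma dotvC u v : dotv u v = dotv v u.
Proof. by apply: eq_bigr => i _; rewrite mulrC. Qed.

Lemma dotvZr (a : R) u v : dotv u (a *: v) = a * dotv u v.
Proof. by rewrite dotvC dotvZl dotvC. Qed.

Lemma dotv_row_mx (u1 v1 u2 v2 : 'rV[R]_n) :
  dotv (row_mx u1 u2) (row_mx v1 v2) = dotv u1 v1 + dotv u2 v2.
Proof.
rewrite /dotv big_split_ord /=.
by congr (_ + _); apply: eq_bigr => i _; rewrite ?row_mxEl ?row_mxEr.
Qed.

Lemma dotv_castmx n' (e : n = n') u v :
  dotv (castmx (erefl, e) u) (castmx (erefl, e) v) = dotv u v.
Proof. by case: n' / e; rewrite !castmx_id. Qed.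

End InnerProduct.

Section CircleTensor.
Variables (R : realType) (n : nat).
Implicit Types (a t b s : R) (u w : 'rV[R]_n).

Definition circle_tensor a t u : 'rV[R]_(n + n) := row_mx (a *: u) (t *: u).

Lemma dotv_circle_tensor a t b s u w :
  dotv (circle_tensor a t u) (circle_tensor b s w) = (a * b + t * s) * dotv u w.
Proof. by rewrite dotv_row_mx !dotvZl !dotvZr !mulrA mulrDl. Qed.

Lemma circle_tensor_inj a t b s u w :
  a ^+ 2 + t ^+ 2 = 1 -> b ^+ 2 + s ^+ 2 = 1 -> 0 < a -> 0 < b ->
  on_sphere u -> on_sphere w ->
  circle_tensor a t u = circle_tensor b s w -> [/\ a = b, t = s & u = w].
Proof.
move=> abs1 bs1 a_gt0 b_gt0 u1 w1 /eq_row_mx[eq_a eq_t].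
set c := dotv w u.
have ac : a = b * c by rewrite -[a]mulr1 -u1 -dotvZl eq_a dotvZl.
have tc : t = s * c by rewrite -[t]mulr1 -u1 -dotvZl eq_t dotvZl.
have c_gt0 : 0 < c by move: a_gt0; rewrite ac pmulr_rgt0.
have c2 : c ^+ 2 = 1 by move: abs1; rewrite ac tc !exprMn -mulrDl bs1 mul1r.
have c1 : c = 1 by move/eqP: c2; rewrite sqrf_eq1 => /orP[] /eqP; lra.
rewrite ac tc c1 !mulr1 in eq_a *; split=> //.
by apply: (@scalerI R [the lmodType R of 'rV[R]_n] b); rewrite ?gt_eqF.
Qed.

End CircleTensor.

Section CirclePoints.
Variable R : realType.

Definition circle_sin (i : nat) : R := (i.+2%:R)^-1.
Definition circle_cos (i : nat) : R := Num.sqrt (1 - circle_sin i ^+ 2).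

Lemma circle_sin_inj : injective circle_sin.
Proof.
by move=> i j /eqP; rewrite /circle_sin (inj_eq (@invr_inj _)) eqr_nat => /eqP[].
Qed.

Lemma circle_sin_sqr_lt1 i : circle_sin i ^+ 2 < 1.
Proof.
have sin_gt0 : 0 < circle_sin i by rewrite invr_gt0 ltr0n.
have sin_lt1 : circle_sin i < 1 by rewrite invf_lt1 ?ltr0n // ltr1n.
by rewrite expr2; nra.
Qed.

Lemma circle_cos_gt0 i : 0 < circle_cos i.
Proof. by rewrite sqrtr_gt0 subr_gt0 circle_sin_sqr_lt1. Qed.

Lemma circle_cos_sin i : circle_cos i ^+ 2 + circle_sin i ^+ 2 = 1.
Proof.
by rewrite sqr_sqrtr ?subrK // subr_ge0 ltW ?circle_sin_sqr_lt1.
Qed.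

End CirclePoints.

Section BlowupEmbedding.
Variables (R : realType) (d m : nat) (V : finType) (f : V -> 'rV[R]_d).

Definition blowup_embed (x : V * 'I_m) : 'rV[R]_(2 * d) :=
  castmx (erefl, etrans (addnn d) (esym (mul2n d)))
    (circle_tensor (circle_cos R x.2) (circle_sin R x.2) (f x.1)).

Lemma dotv_blowup_embed x y :
  dotv (blowup_embed x) (blowup_embed y) =
  (circle_cos R x.2 * circle_cos R y.2 + circle_sin R x.2 * circle_sin R y.2)
    * dotv (f x.1) (f y.1).
Proof. by rewrite dotv_castmx dotv_circle_tensor. Qed.

Hypothesis f_sphere : forall v, on_sphere (f v).

Lemma blowup_embed_sphere x : on_sphere (blowup_embed x).
Proof. by rewrite /on_sphere dotv_blowup_embed f_sphere mulr1 -!expr2 circle_cos_sin. Qed.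

Lemma blowup_embed_inj : injective f -> injective blowup_embed.
Proof.
move=> f_inj [v i] [w j] /(can_inj (castmxK _ _)) /= eq_xy.
have [_ /circle_sin_inj/val_inj-> /f_inj-> //] := circle_tensor_inj
  (circle_cos_sin R i) (circle_cos_sin R j) (circle_cos_gt0 R i)
  (circle_cos_gt0 R j) (f_sphere v) (f_sphere w) eq_xy.
Qed.

End BlowupEmbedding.

Theorem mainTheorem6 (R : realType) (d m : nat) (V : finType) (adj : rel V) :
  (0 < m)%N -> symmetric adj -> irreflexive adj ->
  @orth_graph_in_sphere R d V adj ->
  @orth_graph_in_sphere R (2 * d) _ (@blowup V m adj).
Proof.
move=> _ _ _ [f [f_inj f_sphere f_orth]].
exists (blowup_embed (m := m) f); split.
- exact: blowup_embed_inj.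
- exact: blowup_embed_sphere.
- by move=> x y adj_xy; rewrite dotv_blowup_embed f_orth // mulr0.
Qed.
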